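(* Let $G=(V,E)$ be a weighted undirected graph with $|V|=N$, let $\epsilon\in(0,1)$, $\alpha>0$, and let $S_\epsilon,S\subset V$ be nonempty proper subsets with $\mathrm{vol}(S,G)>0$ such that: (1) $|S_\epsilon|<\epsilon N$ and $\mathrm{vol}(S_\epsilon,G)<\epsilon\,\mathrm{vol}(V,G)$; (2) $\bar d(S_\epsilon,G)<\frac{1-\epsilon}{2(1+\alpha)}\bar d(S,G)$; (3) $\phi(S,G)<\frac{\alpha(1-\epsilon)}{1+\alpha}$. Let $\delta=\frac{\alpha(1-\epsilon)}{1+\alpha}-\phi(S,G)$. If $\tau>0$ satisfies $\alpha\,\bar d(S_\epsilon,G)\le\tau\le\delta\,\bar d(S,G)$, and both $\mathrm{vol}(S_\epsilon,G_\tau)\le\mathrm{vol}(V\setminus S_\epsilon,G_\tau)$ and $\mathrm{vol}(S,G_\tau)\le\mathrm{vol}(V\setminus S,G_\tau)$, then $\mathrm{CoreCut}_\tau(S)<\mathrm{CoreCut}_\tau(S_\epsilon)$.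
   Context: $w_{ij}\ge 0$ are the symmetric edge weights, $d_i=\sum_j w_{ij}$, $\mathrm{vol}(S,G)=\sum_{i\in S}d_i$, $\mathrm{cut}(S,G)=\sum_{i\in S,\,j\in V\setminus S}w_{ij}$, $\phi(S,G)=\mathrm{cut}(S,G)/\mathrm{vol}(S,G)$, and $\bar d(S,G)=\mathrm{vol}(S,G)/|S|$. $G_\tau$ is the graph with adjacency matrix entries $w_{ij}+\tau/N$ for all $i,j$, so $\mathrm{vol}(S,G_\tau)=\mathrm{vol}(S,G)+\tau|S|$. For nonempty proper $S$ with $\mathrm{vol}(S,G_\tau)\le\mathrm{vol}(V\setminus S,G_\tau)$, $\mathrm{CoreCut}_\tau(S)=\dfrac{\mathrm{cut}(S,G)+\frac{\tau}{N}|S||V\setminus S|}{\mathrm{vol}(S,G)+\tau|S|}$. *)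

From HB Require Import structures.
From mathcomp Require Import all_boot all_order all_algebra.
Set Implicit Arguments. Unset Strict Implicit. Unset Printing Implicit Defensive.
Import Order.TTheory GRing.Theory Num.Theory.
Local Open Scope ring_scope.

Section Graph.
Variables (R : realFieldType) (V : finType).

Definition deg (w : V -> V -> R) (i : V) : R := \sum_(j : V) w i j.
Definition vol (w : V -> V -> R) (S : {set V}) : R := \sum_(i in S) deg w i.
Definition cut (w : V -> V -> R) (S : {set V}) : R :=
  \sum_(i in S) \sum_(j in ~: S) w i j.
Definition phi (w : V -> V -> R) (S : {set V}) : R := cut w S / vol w S.
Definition dbar (w : V -> V -> R) (S : {set V}) : R := vol w S / #|S|%:R.
Definition wtau (w : V -> V -> R) (tau : R) : V -> V -> R :=
  fun i j => w i j + tau / #|V|%:R.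
Definition corecut (w : V -> V -> R) (tau : R) (S : {set V}) : R :=
  (cut w S + tau / #|V|%:R * #|S|%:R * #|~: S|%:R) / (vol w S + tau * #|S|%:R).
End Graph.

From HB Require Import structures.
From mathcomp Require Import all_boot all_order all_algebra.
From mathcomp Require Import ring lra.

Set Implicit Arguments.
Unset Strict Implicit.
Unset Printing Implicit Defensive.
Import Order.TTheory GRing.Theory Num.Theory.
Local Open Scope ring_scope.

(* Both CoreCut values are compared with the threshold c = alpha (1 - eps) / (1 + alpha).
   For S, the core term tau/N |S||V \ S| is at most tau |S| <= (c - phi(S)) vol(S), so the
   numerator is at most c vol(S) and CoreCut_tau(S) <= c.  For S_eps, the complement holds more
   than (1 - eps) N vertices, so the numerator exceeds (1 - eps) tau |S_eps|, while
   tau >= alpha dbar(S_eps) bounds the denominator by (1 + alpha)/alpha tau |S_eps|; hence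
   CoreCut_tau(S_eps) > c. *)

Section CoreCutBounds.
Variables (R : realFieldType) (V : finType) (w : V -> V -> R).
Hypothesis w_ge0 : forall i j, 0 <= w i j.

Lemma cut_ge0 (A : {set V}) : 0 <= cut w A.
Proof. by apply: sumr_ge0 => i _; apply: sumr_ge0 => j _; apply: w_ge0. Qed.

Lemma vol_ge0 (A : {set V}) : 0 <= vol w A.
Proof. by apply: sumr_ge0 => i _; apply: sumr_ge0 => j _; apply: w_ge0. Qed.

Lemma natr_cardsC (A : {set V}) : #|A|%:R + #|~: A|%:R = #|V|%:R :> R.
Proof. by rewrite -natrD cardsC. Qed.

Lemma core_termE (tau : R) (A : {set V}) :
  tau / #|V|%:R * #|A|%:R * #|~: A|%:R = tau * #|A|%:R * (#|~: A|%:R / #|V|%:R).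
Proof. by ring. Qed.

Lemma core_term_le (tau : R) (A : {set V}) : A != set0 -> 0 < tau ->
  tau / #|V|%:R * #|A|%:R * #|~: A|%:R <= tau * #|A|%:R.
Proof.
move=> A_ne tau_gt0; have A_gt0 : 0 < #|A|%:R :> R by rewrite ltr0n card_gt0.
have N_gt0 : 0 < #|V|%:R :> R by rewrite -(natr_cardsC A) ltr_wpDr.
rewrite core_termE -[leRHS]mulr1 ler_pM2l ?mulr_gt0 // ler_pdivrMr // mul1r.
by rewrite -(natr_cardsC A) lerDr.
Qed.

Lemma core_term_gt (tau k : R) (A : {set V}) : A != set0 -> 0 < tau ->
  k * #|V|%:R < #|~: A|%:R ->
  k * (tau * #|A|%:R) < tau / #|V|%:R * #|A|%:R * #|~: A|%:R.
Proof.
move=> A_ne tau_gt0 big_compl; have A_gt0 : 0 < #|A|%:R :> R by rewrite ltr0n card_gt0.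
have N_gt0 : 0 < #|V|%:R :> R by rewrite -(natr_cardsC A) ltr_wpDr.
by rewrite core_termE mulrC ltr_pM2l ?mulr_gt0 // ltr_pdivlMr.
Qed.

Lemma corecut_le (c tau : R) (A : {set V}) (A_ne : A != set0) :
  0 <= c -> 0 < tau -> 0 < vol w A ->
  tau * #|A|%:R <= (c - phi w A) * vol w A -> corecut w tau A <= c.
Proof.
move=> c_ge0 tau_gt0 vol_gt0 tau_small.
have A_gt0 : 0 < #|A|%:R :> R by rewrite ltr0n card_gt0.
have cutE : cut w A = phi w A * vol w A by rewrite /phi mulfVK ?gt_eqF.
have core := core_term_le A_ne tau_gt0.
have cx_ge0 : 0 <= c * (tau * #|A|%:R) by rewrite mulr_ge0 // mulr_ge0 // ltW.
rewrite /corecut ler_pdivrMr ?addr_gt0 ?mulr_gt0 // cutE.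
move: tau_small core cx_ge0; rewrite mulrBl mulrDr; lra.
Qed.

Lemma corecut_gt (alpha k tau : R) (A : {set V}) (A_ne : A != set0) :
  0 < alpha -> 0 <= k -> 0 < tau ->
  alpha * vol w A <= tau * #|A|%:R -> k * #|V|%:R < #|~: A|%:R ->
  alpha * k / (1 + alpha) < corecut w tau A.
Proof.
move=> alpha_gt0 k_ge0 tau_gt0 vol_small big_compl.
have A_gt0 : 0 < #|A|%:R :> R by rewrite ltr0n card_gt0.
have core := core_term_gt A_ne tau_gt0 big_compl.
(* vol(A) <= tau |A| / alpha turns the denominator into (1 + alpha)/alpha tau |A| *)
have denom : alpha * k / (1 + alpha) * (vol w A + tau * #|A|%:R) <= k * (tau * #|A|%:R).
  rewrite mulrAC ler_pdivrMr; last lra.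
  move: vol_small; set v := vol w A; set x := tau * #|A|%:R => vol_small.
  nra.
rewrite /corecut ltr_pdivlMr; last by rewrite ltr_wpDl ?vol_ge0 ?mulr_gt0.
have := cut_ge0 A; lra.
Qed.

End CoreCutBounds.

Theorem corollary4p7 (R : realFieldType) (V : finType) (w : V -> V -> R)
  (w_sym : forall i j, w i j = w j i) (w_nn : forall i j, 0 <= w i j)
  (eps alpha tau : R) (Seps S : {set V})
  (heps0 : 0 < eps) (heps1 : eps < 1) (halpha : 0 < alpha)
  (hSeps_ne : Seps != set0) (hSeps_pr : Seps != setT)
  (hS_ne : S != set0) (hS_pr : S != setT)
  (hvolS : 0 < vol w S)
  (h1a : #|Seps|%:R < eps * #|V|%:R)
  (h1b : vol w Seps < eps * vol w setT)
  (h2 : dbar w Seps < (1 - eps) / (2 * (1 + alpha)) * dbar w S)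
  (h3 : phi w S < alpha * (1 - eps) / (1 + alpha))
  (htau : 0 < tau)
  (htau_lo : alpha * dbar w Seps <= tau)
  (htau_hi : tau <= (alpha * (1 - eps) / (1 + alpha) - phi w S) * dbar w S)
  (hbalSeps : vol (wtau w tau) Seps <= vol (wtau w tau) (~: Seps))
  (hbalS : vol (wtau w tau) S <= vol (wtau w tau) (~: S)) :
  corecut w tau S < corecut w tau Seps.
Proof.
have S_gt0 : 0 < #|S|%:R :> R by rewrite ltr0n card_gt0.
have Seps_gt0 : 0 < #|Seps|%:R :> R by rewrite ltr0n card_gt0.
apply: (@le_lt_trans _ _ (alpha * (1 - eps) / (1 + alpha))).
  apply: corecut_le => //; first by rewrite divr_ge0 ?mulr_ge0; lra.
  by move: htau_hi; rewrite /dbar mulrA -ler_pdivlMr.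
apply: corecut_gt => //; first lra.
  by move: htau_lo; rewrite /dbar mulrA ler_pdivrMr.
by have := natr_cardsC R Seps; lra.
Qed.
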